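(* For every $n\ge1$, the Houghton group $\mathcal{H}_n$ is not co-Hopfian; that is, there is an injective homomorphism $\mathcal{H}_n\to\mathcal{H}_n$ that is not surjective.
   Context: Let $\mathbb{N}=\{1,2,3,\dots\}$, $\mathbb{Z}_n$ the integers modulo $n$, $R_n=\mathbb{Z}_n\times\mathbb{N}$. The Houghton group $\mathcal{H}_n$ is the group of permutations $\sigma$ of $R_n$ for which there exist $N\ge0$ and integers $t_i$ with $(i,k)\sigma=(i,k+t_i)$ for all $i\in\mathbb{Z}_n$, $k\ge N$ (right actions). A group is co-Hopfian if every injective endomorphism of it is an automorphism. *)

From mathcomp Require Import all_boot all_order all_algebra.
Set Implicit Arguments. Unset Strict Implicit. Unset Printing Implicit Defensive.
Import GRing.Theory Num.Theory.

(* R_n = Z_n x N.  Z_n is represented by 'I_n (n >= 1), and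
   N = {1,2,3,...} is represented by nat via the relabelling k <-> k+1
   (the pair (i, k) : 'I_n * nat stands for (i, k+1)). *)
Definition Ray (n : nat) : Type := ('I_n * nat)%type.

Definition houghton (n : nat) (s : Ray n -> Ray n) : Prop :=
  bijective s /\
  exists (N : nat) (t : 'I_n -> int),
    forall (i : 'I_n) (k : nat), (N <= k)%N ->
      (s (i, k)).1 = i /\ ((s (i, k)).2 : int) = (k%:Z + t i)%R.

(* Group product with right actions: (x)(s t) = ((x)s)t, i.e. s*t = t \o s. *)
Definition hmul (n : nat) (s t : Ray n -> Ray n) : Ray n -> Ray n := t \o s.

From mathcomp Require Import all_boot all_order all_algebra.
From Stdlib Require Import FunctionalExtensionality.
Import GRing.Theory Num.Theory.

(* Transport along the injection (i, k) |-> (i, k + 1) of R_n onto the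
   complement of the base points (i, 0), extended by the identity on the base
   points.  This is an injective endomorphism of H_n whose image fixes every
   base point, so the transposition of (i0, 0) and (i0, 1) is not in it. *)

Definition hshift (n : nat) (s : Ray n -> Ray n) : Ray n -> Ray n :=
  fun x => if x.2 is k.+1 then ((s (x.1, k)).1, (s (x.1, k)).2.+1) else x.

Arguments hshift {n}.

Section Shift.

Variable n : nat.
Implicit Types s t : Ray n -> Ray n.

Lemma hshift_comp s t : hshift t \o hshift s = hshift (t \o s).
Proof.
apply: functional_extensionality => -[i [|k]] //=.
by rewrite /hshift /=; case: (s (i, k)).
Qed.

Lemma hshift_id : hshift (@id (Ray n)) = id.
Proof. by apply: functional_extensionality => -[i [|k]]. Qed.

Lemma hshift_inj : injective (@hshift n).
Proof.
move=> s t e; apply: functional_extensionality => -[i k].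
have := congr1 (fun f => f (i, k.+1)) e; rewrite /hshift /=.
by case: (s (i, k)) => a b; case: (t (i, k)) => c d /= [-> ->].
Qed.

Lemma bij_hshift s : bijective s -> bijective (hshift s).
Proof.
move=> [g sK gK]; exists (hshift g) => x.
- have gsE : g \o s = id by apply: functional_extensionality.
  by rewrite -[hshift g _]/((_ \o _) x) hshift_comp gsE hshift_id.
- have sgE : s \o g = id by apply: functional_extensionality.
  by rewrite -[hshift s _]/((_ \o _) x) hshift_comp sgE hshift_id.
Qed.

Lemma houghton_hshift s : houghton s -> houghton (hshift s).
Proof.
move=> [bij_s [N [t eventually_s]]]; split; first exact: bij_hshift.
exists N.+1, t => i [|k] //= leNk.
have [-> sikE] := eventually_s i k leNk; split => //.
by rewrite -(addn1 (s (i, k)).2) PoszD sikE -(addn1 k) PoszD addrAC.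
Qed.

Definition swap01 i0 (x : Ray n) : Ray n :=
  if x == (i0, 0) then (i0, 1) else if x == (i0, 1) then (i0, 0) else x.

Lemma swap01K i0 : involutive (swap01 i0).
Proof.
move=> x; rewrite /swap01.
have [-> | x_ne0] := eqVneq x (i0, 0); first by rewrite !xpair_eqE !eqxx.
have [-> | x_ne1] := eqVneq x (i0, 1); first by rewrite !xpair_eqE !eqxx.
by rewrite (negbTE x_ne0) (negbTE x_ne1).
Qed.

Lemma houghton_swap01 i0 : houghton (swap01 i0).
Proof.
split; first by exists (swap01 i0); apply: swap01K.
exists 2, (fun=> 0%R) => i k le2k; rewrite /swap01 !xpair_eqE.
have [k_ne0 k_ne1] : k != 0 /\ k != 1 by case: k le2k => [|[]].
by rewrite (negbTE k_ne0) (negbTE k_ne1) !andbF addr0.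
Qed.

Lemma swap01_base i0 : swap01 i0 (i0, 0) = (i0, 1).
Proof. by rewrite /swap01 eqxx. Qed.

End Shift.

Arguments swap01 {n}.

Theorem mainTheorem10 (n : nat) (hn : (0 < n)%N) :
  exists phi : (Ray n -> Ray n) -> (Ray n -> Ray n),
    (forall s, houghton s -> houghton (phi s)) /\
    (forall s t, houghton s -> houghton t ->
        phi (hmul s t) = hmul (phi s) (phi t)) /\
    (forall s t, houghton s -> houghton t -> phi s = phi t -> s = t) /\
    (exists u, houghton u /\ forall s, houghton s -> phi s <> u).
Proof.
exists hshift; split; first exact: houghton_hshift.
split; first by move=> s t _ _; rewrite /hmul hshift_comp.
split; first by move=> s t _ _ /hshift_inj.
pose i0 := Ordinal hn.
exists (swap01 i0); split; first exact: houghton_swap01.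
move=> s _ /(congr1 (fun f => f (i0, 0))).
by rewrite swap01_base => -[].
Qed.
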